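(* Let $D\subset\mathbb N^n$ be finite, not contained in any coordinate hyperplane, and $p$ a prime. Then (i) the sets $MI_{D,p}(r)$, $r\ge1$, are pairwise disjoint; (ii) $MI_{D,p}(r)$ is empty for $r$ large enough; (iii) $\delta_r$ maps $MI_{D,p}(r)$ to itself, and for all $i,k$ and $U\in MI_{D,p}(r)$, $\varphi_{\delta_r^kU}(i)=\varphi_U(i+k)$.
   Context: $s_p$ = base-$p$ digit sum. $E_{D,p}(r)$ = set of $U=(u_{\mathbf d})_{\mathbf d\in D}\in\{0,\dots,p^r-1\}^D$ with $\sum u_{\mathbf d}\mathbf d\equiv0\pmod{p^r-1}$ and all coordinates of $\sum u_{\mathbf d}\mathbf d$ positive; $s_p(U)=\sum s_p(u_{\mathbf d})$; $\delta_p(D)=\frac1{p-1}\min_{r\ge1}\min_{U\in E_{D,p}(r)}s_p(U)/r$; $U\in E_{D,p}(r)$ is minimal if $s_p(U)=(p-1)r\delta_p(D)$. The shift $\delta_r$ on $\{0,\dots,p^r-1\}$ sends $k\le p^r-2$ to $pk\bmod(p^r-1)$ and fixes $p^r-1$, applied coordinatewise. For $U\in E_{D,p}(r)$, $\varphi_U:\mathbb Z/r\mathbb Z\to\mathbb N_{>0}^n$, $\varphi_U(k)=\frac1{p^r-1}\sum_{\mathbf d}\mathbf d(\delta_r^kU)_{\mathbf d}$; $U$ is irreducible if $\varphi_U$ is injective; $MI_{D,p}(r)$ is the set of minimal irreducible elements of $E_{D,p}(r)$. *)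

From HB Require Import structures.
From mathcomp Require Import all_boot all_order all_algebra.
From mathcomp Require Import finmap.
From Stdlib Require Import ClassicalEpsilon.

Set Implicit Arguments.
Unset Strict Implicit.
Unset Printing Implicit Defensive.

Import Order.TTheory GRing.Theory Num.Theory.
Local Open Scope fset_scope.

Definition vec (n : nat) := {ffun 'I_n -> nat}.

Section Defs.
Variables (n : nat) (D : {fset vec n}) (p : nat).

Definition famD := {ffun D -> nat}.

(* base-p digit sum: sum of the base-p digits (k / p^i) mod p;
   for p >= 2 all digits of index > k vanish. *)
Definition sp (k : nat) : nat := \sum_(i < k.+1) (k %/ p ^ i) %% p.

Definition spU (U : famD) : nat := \sum_(d : D) sp (U d).

Definition wsum (U : famD) (j : 'I_n) : nat := \sum_(d : D) U d * (val d) j.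

Definition inE (r : nat) (U : famD) : bool :=
  [&& 0 < r,
      [forall d : D, U d < p ^ r],
      [forall j : 'I_n, (p ^ r - 1) %| wsum U j] &
      [forall j : 'I_n, 0 < wsum U j]].

Definition is_min_ratio (q : rat) : Prop :=
  (exists r U, inE r U /\ q = ((spU U)%:R / r%:R)%R) /\
  (forall r U, inE r U -> (q <= (spU U)%:R / r%:R)%R).

Definition delta : rat :=
  ((epsilon (inhabits 0%R) is_min_ratio) / (p.-1)%:R)%R.

Definition minimalU (r : nat) (U : famD) : Prop :=
  inE r U /\ ((spU U)%:R = (p.-1)%:R * r%:R * delta)%R.

Definition shift (r k : nat) : nat :=
  if k == p ^ r - 1 then k else (p * k) %% (p ^ r - 1).

Definition shiftU (r : nat) (U : famD) : famD := [ffun d => shift r (U d)].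

(* phi_U : Z/rZ -> N^n, evaluated on the representative k mod r *)
Definition phi (r : nat) (U : famD) (k : nat) : vec n :=
  [ffun j => wsum (iter (k %% r) (shiftU r) U) j %/ (p ^ r - 1)].

Definition irreducibleU (r : nat) (U : famD) : Prop :=
  forall i j, i < r -> j < r -> phi r U i = phi r U j -> i = j.

Definition MI (r : nat) (U : famD) : Prop := minimalU r U /\ irreducibleU r U.

End Defs.

From Pilot Require Import Defs.
From HB Require Import structures.
From mathcomp Require Import all_boot all_order all_algebra.
From mathcomp Require Import finmap.
From mathcomp Require Import zify.

(* Write an r-digit base-p number u as u = b + p^(r-1) a with top digit a.
   Then p u = (a + p b) + a (p^r - 1), so the shift delta_r rotates the r
   digits of u cyclically (the all-(p-1) word p^r - 1 being its own
   rotation).  Hence delta_r preserves digit sums, multiplies sum u_d d by p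
   modulo p^r - 1 (so preserves E_{D,p}(r)), has period r, and merely
   rotates phi_U; this gives (iii).  For (i), a minimal U determines r as
   s_p(U) / ((p - 1) delta_p(D)), where s_p(U) > 0 because the coordinates of
   sum u_d d are positive.  For (ii), every value of phi_U lies in a box
   independent of r, so injectivity of phi_U bounds r. *)

Set Implicit Arguments.
Unset Strict Implicit.
Unset Printing Implicit Defensive.
Import Order.TTheory GRing.Theory Num.Theory.

Section DigitSum.
Variable p : nat.
Hypothesis p_gt1 : 1 < p.
Let p_gt0 : 0 < p := ltnW p_gt1.

Definition digitsum (N k : nat) := \sum_(i < N) (k %/ p ^ i) %% p.

Lemma digitsum0 N : digitsum N 0 = 0.
Proof. by rewrite /digitsum big1 // => i _; rewrite div0n mod0n. Qed.

Lemma digitsumS N k : digitsum N.+1 k = k %% p + digitsum N (k %/ p).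
Proof.
rewrite /digitsum big_ord_recl expn0 divn1; congr (_ + _).
by apply: eq_bigr => i _; rewrite lift0 expnS divnMA.
Qed.

Lemma digitsum_cat N M b c :
  b < p ^ N -> digitsum (N + M) (b + p ^ N * c) = digitsum N b + digitsum M c.
Proof.
elim: N b => [|N IHN] b.
  by rewrite expn0 ltnS leqn0 => /eqP ->; rewrite digitsum0 mul1n.
move=> ltb; rewrite addSn !digitsumS expnS -mulnA (addnC b) (mulnC p).
rewrite modnMDl divnMDl // (addnC (p ^ N * c)) IHN ?addnA //.
by rewrite ltn_divLR // -expnSr.
Qed.

Lemma digitsum_pad N M k : k < p ^ N -> N <= M -> digitsum M k = digitsum N k.
Proof.
move=> ltk /subnKC <-; have := digitsum_cat (M - N) 0 ltk.
by rewrite muln0 addn0 digitsum0 addn0.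
Qed.

Lemma sp_digitsum N k : k < p ^ N -> sp p k = digitsum N k.
Proof.
have ltk : k < p ^ k.+1 by apply: ltnW; apply: ltn_expl.
move=> ltkN; case: (leqP N k.+1) => [leN | /ltnW leN].
  exact: digitsum_pad.
by rewrite (digitsum_pad ltk leN).
Qed.

Lemma digitsum_eq0 N k : k < p ^ N -> digitsum N k = 0 -> k = 0.
Proof.
elim: N k => [|N IHN] k; first by rewrite expn0 ltnS leqn0 => /eqP.
rewrite digitsumS => ltk /eqP; rewrite addn_eq0 => /andP[/eqP modk0 /eqP dsum0].
have divk0 : k %/ p = 0 by apply: IHN dsum0; rewrite ltn_divLR // -expnSr.
by rewrite (divn_eq k p) modk0 divk0.
Qed.

Lemma sp_eq0 k : sp p k = 0 -> k = 0.
Proof.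
have ltk : k < p ^ k.+1 by apply: ltnW; apply: ltn_expl.
by rewrite (sp_digitsum ltk); apply: digitsum_eq0.
Qed.

End DigitSum.

Section Shift.
Variable p : nat.
Hypothesis p_gt1 : 1 < p.
Let p_gt0 : 0 < p := ltnW p_gt1.

Lemma shift_rotate s a b :
  a < p -> b < p ^ s -> shift p s.+1 (b + p ^ s * a) = a + p * b.
Proof.
move=> lta ltb; rewrite /shift expnS; have P_gt0 : 0 < p ^ s by rewrite expn_gt0 p_gt0.
move: (p ^ s) P_gt0 ltb => P P_gt0 ltb.
case: eqP => [top | not_top].
  have a_top : p.-1 <= a.
    rewrite leqNgt; apply/negP => lt_a.
    have := leq_mul (leqnn P) lt_a.
    rewrite mulnS -subn1 mulnBr muln1 (mulnC P p); lia.
  nia.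
have -> : p * (b + P * a) = a * (p * P - 1) + (a + p * b).
  have : 1 <= p * P by rewrite muln_gt0 p_gt0.
  nia.
by rewrite modnMDl modn_small //; nia.
Qed.

Lemma sp_shift r u : 0 < r -> u < p ^ r -> sp p (shift p r u) = sp p u.
Proof.
case: r => // s _ ltu.
have ltb : u %% p ^ s < p ^ s by rewrite ltn_mod expn_gt0 p_gt0.
have lta : u %/ p ^ s < p by rewrite ltn_divLR ?expn_gt0 ?p_gt0 // -expnS.
rewrite (divn_eq u (p ^ s)) addnC mulnC in ltu *.
move: (u %/ p ^ s) (u %% p ^ s) lta ltb ltu => a b lta ltb ltu.
have lt_rot : a + p ^ 1 * b < p ^ (1 + s) by rewrite expn1 add1n expnS; nia.
rewrite shift_rotate // -[p in p * b]expn1 (sp_digitsum p_gt1 lt_rot).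
rewrite digitsum_cat ?expn1 //.
rewrite -[s.+1]addn1 in ltu; rewrite (sp_digitsum p_gt1 ltu) digitsum_cat //.
exact: addnC.
Qed.

Variable r : nat.
Hypothesis r_gt0 : 0 < r.
Local Notation m := (p ^ r - 1).

Lemma expn_gt1 : 1 < p ^ r.
Proof. by have := ltn_expl r p_gt1; lia. Qed.

Lemma coprime_pred_expn : coprime m p.
Proof. by rewrite subn1 -(coprime_pexpr _ _ r_gt0) coprimePn ?expn_gt0 ?p_gt0. Qed.

Lemma shift_modE u : shift p r u = p * u %[mod m].
Proof.
rewrite /shift; case: eqP => [->|_]; last by rewrite modn_mod.
by rewrite modnMl modnn.
Qed.

Lemma shift_lt u : u < p ^ r -> shift p r u < p ^ r.
Proof.
rewrite /shift; case: eqP => // _ _.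
have := ltn_pmod (p * u) (_ : 0 < m); have := expn_gt1; lia.
Qed.

Lemma shift_eq0 u : u < p ^ r -> (shift p r u == 0) = (u == 0).
Proof.
move=> ltu; rewrite /shift; have [//|u_neq_m] := eqVneq u m.
have [-> | u_neq0] := eqVneq u 0; first by rewrite muln0 mod0n.
apply/negbTE/negP => pu_mod0.
have : m %| p * u by [].
rewrite Gauss_dvdr ?coprime_pred_expn // => /dvdn_leq.
by rewrite lt0n u_neq0 => /(_ isT); have := expn_gt1; lia.
Qed.

Lemma iter_shift_small j u : u < m -> iter j (shift p r) u = p ^ j * u %% m.
Proof.
move=> ltu; elim: j => [|j IHj]; first by rewrite mul1n modn_small.
rewrite iterS IHj /shift ltn_eqF ?ltn_pmod //; last by have := expn_gt1; lia.
by rewrite modnMmr expnS mulnA.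
Qed.

Lemma iter_shift_period u : u < p ^ r -> iter r (shift p r) u = u.
Proof.
move=> ltu; have [-> | u_neq_m] := eqVneq u m.
  by apply: iter_fix; rewrite /shift eqxx.
have ltu_m : u < m by have := expn_gt1; lia.
rewrite iter_shift_small // -{1}(subnK (ltnW expn_gt1)) mulnDl mul1n.
by rewrite mulnC modnMDl modn_small.
Qed.

End Shift.

Section ShiftFamily.
Variables (n : nat) (D : {fset vec n}) (p : nat).
Hypothesis p_gt1 : 1 < p.
Variable r : nat.
Hypothesis r_gt0 : 0 < r.
Local Notation m := (p ^ r - 1).
Local Notation sU := (shiftU p r).

Definition bounded (U : famD D) := forall d, U d < p ^ r.

Lemma iter_shiftU k (U : famD D) :
  iter k sU U = [ffun d => iter k (shift p r) (U d)].
Proof.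
elim: k => [|k IHk]; first by apply/ffunP => d; rewrite ffunE.
by rewrite iterS IHk; apply/ffunP => d; rewrite !ffunE.
Qed.

Lemma inE_bounded (U : famD D) : Defs.inE p r U -> bounded U.
Proof. by case/and4P=> _ /forallP. Qed.

Lemma bounded_shiftU (U : famD D) : bounded U -> bounded (sU U).
Proof. by move=> ltU d; rewrite ffunE shift_lt. Qed.

Lemma bounded_iter_shiftU k (U : famD D) : bounded U -> bounded (iter k sU U).
Proof. by move=> ltU; elim: k => //= k; apply: bounded_shiftU. Qed.

Lemma iter_shiftU_period (U : famD D) : bounded U -> iter r sU U = U.
Proof.
by move=> ltU; rewrite iter_shiftU; apply/ffunP => d; rewrite ffunE iter_shift_period.
Qed.

Lemma iter_shiftU_mod k (U : famD D) :
  bounded U -> iter k sU U = iter (k %% r) sU U.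
Proof.
move=> ltU; rewrite {1}(divn_eq k r) addnC iterD; congr iter.
by elim: (k %/ r) => // q IHq; rewrite mulSn iterD IHq iter_shiftU_period.
Qed.

Lemma phi_mod (U : famD D) k : phi p r U (k %% r) = phi p r U k.
Proof. by rewrite /phi modn_mod. Qed.

Lemma phi_iter_shiftU (U : famD D) i k :
  bounded U -> phi p r (iter k sU U) i = phi p r U (i + k).
Proof.
move=> ltU; apply/ffunP => j; rewrite !ffunE -iterD.
by rewrite (iter_shiftU_mod (i %% r + k)) // modnDml.
Qed.

Lemma wsum_shiftU (U : famD D) j : wsum (sU U) j = p * wsum U j %[mod m].
Proof.
rewrite /wsum -modn_summ big_distrr /= -[RHS]modn_summ; congr (_ %% _).
apply: eq_bigr => d _; rewrite ffunE -modnMml shift_modE // modnMml.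
by rewrite mulnA.
Qed.

Lemma wsum_shiftU_eq0 (U : famD D) j :
  bounded U -> (wsum (sU U) j == 0) = (wsum U j == 0).
Proof.
move=> ltU; rewrite /wsum !sum_nat_eq0; apply: eq_forallb => d.
by rewrite ffunE !muln_eq0 shift_eq0.
Qed.

Lemma spU_shiftU (U : famD D) : bounded U -> spU p (sU U) = spU p U.
Proof. by move=> ltU; apply: eq_bigr => d _; rewrite ffunE sp_shift. Qed.

Lemma inE_shiftU (U : famD D) : Defs.inE p r U -> Defs.inE p r (sU U).
Proof.
case/and4P=> _ /forallP ltU /forallP dvd_wsum /forallP wsum_gt0.
apply/and4P; split=> //; apply/forallP => j.
- exact: bounded_shiftU.
- by rewrite /dvdn wsum_shiftU -modnMmr (eqP (dvd_wsum j)) muln0 mod0n.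
- by rewrite lt0n wsum_shiftU_eq0 // -lt0n.
Qed.

Lemma irreducibleU_shiftU (U : famD D) :
  bounded U -> irreducibleU p r U -> irreducibleU p r (sU U).
Proof.
move=> ltU irrU i j ltir ltjr; rewrite -[sU U]/(iter 1 sU U) !phi_iter_shiftU //.
rewrite -phi_mod -[in RHS]phi_mod => eq_phi.
have /eqP := irrU _ _ (ltn_pmod _ r_gt0) (ltn_pmod _ r_gt0) eq_phi.
by rewrite eqn_modDr !modn_small // => /eqP.
Qed.

Lemma MI_shiftU (U : famD D) : MI p r U -> MI p r (sU U).
Proof.
move=> [[inU minU] irrU]; have ltU := inE_bounded inU.
split; last exact: irreducibleU_shiftU.
by split; [exact: inE_shiftU | rewrite /minimalU spU_shiftU].
Qed.

Definition colsum (j : 'I_n) := \sum_(d : D) val d j.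

Lemma phi_le_colsum (U : famD D) i j : bounded U -> phi p r U i j <= colsum j.
Proof.
move=> ltU; have m_gt0 : 0 < m by have := expn_gt1 p_gt1 r_gt0; lia.
rewrite ffunE -(mulnK (colsum j) m_gt0) leq_div2r // /wsum /colsum big_distrl.
apply: leq_sum => d _; rewrite mulnC leq_mul2l.
by have := bounded_iter_shiftU (i %% r) ltU d; case: (val d j) => //= _; lia.
Qed.

End ShiftFamily.

Section Period.
Variables (n : nat) (D : {fset vec n}) (p : nat).
Hypothesis p_gt1 : 1 < p.

Lemma inE_gt0 r (U : famD D) : Defs.inE p r U -> 0 < r.
Proof. by case/and4P. Qed.

Lemma inE_spU_gt0 r (U : famD D) : 0 < n -> Defs.inE p r U -> 0 < spU p U.
Proof.
move=> n_gt0 /and4P[_ _ _ /forallP/(_ (Ordinal n_gt0))].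
rewrite !lt0n /wsum /spU !sum_nat_eq0; apply: contra => /forallP sp_eq0U.
by apply/forallP => d; rewrite (sp_eq0 p_gt1 (eqP (sp_eq0U d))) mul0n.
Qed.

Lemma minimalU_period_unique r r' (U : famD D) :
  0 < spU p U -> minimalU p r U -> minimalU p r' U -> r = r'.
Proof.
move=> spU_gt0 [_ minU] [_ minU']; set c := ((p.-1)%:R * delta D p)%R : rat.
have c_neq0 : (c != 0)%R.
  apply: contraTneq spU_gt0 => c0.
  by rewrite -(ltr0n rat) minU mulrAC -/c c0 mul0r ltxx.
apply/eqP; rewrite -(eqr_nat rat); apply/eqP; apply: (mulfI c_neq0).
by rewrite !(mulrAC _ (delta D p)) -minU -minU'.
Qed.

Lemma irreducibleU_dim0 r (U : famD D) : n = 0 -> irreducibleU p r U -> r <= 1.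
Proof.
move=> n0 irrU; rewrite leqNgt; apply/negP => r_gt1.
suff /(irrU 0 1 (ltnW r_gt1) r_gt1) : phi p r U 0 = phi p r U 1 by [].
by apply/ffunP => j; have := ltn_ord j; rewrite {2}n0.
Qed.

Lemma MI_period_unique r r' (U : famD D) : MI p r U -> MI p r' U -> r = r'.
Proof.
move=> [minU irrU] [minU' irrU'].
have [r_gt0 r'_gt0] := (inE_gt0 minU.1, inE_gt0 minU'.1).
have [n0 | n_gt0] := posnP n.
  by have := irreducibleU_dim0 n0 irrU; have := irreducibleU_dim0 n0 irrU'; lia.
exact: minimalU_period_unique (inE_spU_gt0 n_gt0 minU.1) minU minU'.
Qed.

Lemma irreducibleU_period_le r (U : famD D) :
  0 < r -> bounded p r U -> irreducibleU p r U -> r <= (\max_j colsum D j).+1 ^ n.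
Proof.
move=> r_gt0 ltU irrU; set C := \max_j colsum D j.
have phi_lt i j : phi p r U i j < C.+1.
  by rewrite ltnS (leq_trans (phi_le_colsum p_gt1 r_gt0 _ _ ltU)) ?leq_bigmax.
pose f (i : 'I_r) : {ffun 'I_n -> 'I_C.+1} := [ffun j => inord (phi p r U i j)].
have f_inj : injective f.
  move=> i i' /ffunP f_eq; apply: val_inj; apply: irrU; rewrite ?ltn_ord //.
  apply/ffunP => j; have /(congr1 val) := f_eq j.
  by rewrite [f i j]ffunE [f i' j]ffunE /= !inordK ?phi_lt.
by have := leq_card f f_inj; rewrite card_ord card_ffun !card_ord.
Qed.

End Period.

Theorem lemma2p9 (n : nat) (D : {fset vec n}) (p : nat) :
  prime p ->
  (forall j : 'I_n, exists d : D, (val d) j != 0) ->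
  (forall r r' (U : famD D), MI p r U -> MI p r' U -> r = r') /\
  (exists R, forall r, R <= r -> forall U : famD D, ~ MI p r U) /\
  (forall r (U : famD D), MI p r U ->
     MI p r (shiftU p r U) /\
     forall i k, phi p r (iter k (shiftU p r) U) i = phi p r U (i + k)).
Proof.
move=> /prime_gt1 p_gt1 _; split; [|split].
- exact: MI_period_unique.
- exists ((\max_j colsum D j).+1 ^ n).+1 => r le_Rr U [[inU _] irrU].
  have r_gt0 := inE_gt0 inU.
  have := irreducibleU_period_le p_gt1 r_gt0 (inE_bounded inU) irrU.
  by rewrite leqNgt le_Rr.
- move=> r U MI_U; have r_gt0 := inE_gt0 MI_U.1.1.
  split; first exact: MI_shiftU.
  by move=> i k; apply: phi_iter_shiftU; last exact: inE_bounded MI_U.1.1.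
Qed.
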